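(* Let $\Gamma_2$ be a finite alphabet and $n\in\mathbb N$. There is a pushdown automaton with $3n+3$ states and stack alphabet consisting of two symbols, in whose runs the stack height never exceeds $n$, whose language is exactly $(\Gamma_2)^{2^{n+1}}$.
   Context: A pushdown automaton has transitions labelled by a letter or $\epsilon$ and a stack operation (push a symbol, pop a symbol, or no operation); it accepts a word if there is a run from the initial state with empty stack reading the word and ending in a final state with empty stack. *)

From mathcomp Require Import all_boot.
Set Implicit Arguments. Unset Strict Implicit. Unset Printing Implicit Defensive.

Inductive stack_op (G : Type) := Push of G | Pop of G | Nop.

(* A transition (p, a, o, q) goes from p to q,
   reads a (None = epsilon), and performs stack operation o. *)
Record pda (Sigma Q G : finType) := Pda {
  pda_init  : Q;
  pda_final : pred Q;
  pda_trans : (Q * option Sigma * stack_op G * Q) -> Prop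
}.

(* Effect of a stack operation on a stack (top of stack = head of the list);
   None means the operation is not applicable (pop of a different/absent symbol). *)
Definition apply_op (G : eqType) (o : stack_op G) (s : seq G) : option (seq G) :=
  match o with
  | Push g => Some (g :: s)
  | Pop g => match s with
             | h :: t => if h == g then Some t else None
             | [::] => None
             end
  | Nop => Some s
  end.

Definition label_word (Sigma : Type) (a : option Sigma) : seq Sigma :=
  match a with Some x => [:: x] | None => [::] end.

Inductive run (Sigma Q G : finType) (A : pda Sigma Q G) :
    Q -> seq G -> seq Sigma -> Q -> seq G -> Prop :=
  | run_nil p s : run A p s [::] p s
  | run_step p s a o p' s' w q t :
      pda_trans A (p, a, o, p') -> apply_op o s = Some s' ->
      run A p' s' w q t ->
      run A p s (label_word a ++ w) q t.

Definition accepts (Sigma Q G : finType) (A : pda Sigma Q G) (w : seq Sigma) : Prop :=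
  exists q, pda_final A q /\ run A (pda_init A) [::] w q [::].

Definition stack_bounded (Sigma Q G : finType) (A : pda Sigma Q G) (h : nat) : Prop :=
  forall w q t, run A (pda_init A) [::] w q t -> size t <= h.

From mathcomp Require Import all_boot zify.
Set Implicit Arguments. Unset Strict Implicit. Unset Printing Implicit Defensive.

(* The automaton has a level k <= n and a phase in {0, 1, 2}; a level-k block
   reads 2^(k+1) letters, as two level-(k-1) blocks (one letter each at level
   0).  Descending into a half pushes a bit recording which half it is, and the
   matching pop tells where to resume, so the stack height is n minus the
   level.  Conversely the number of letters read so far is determined by the
   configuration: it is phase * 2^level plus the stack bits read in binary,
   the bit at depth i weighing 2^(level + 1 + i).  This quantity is 0
   initially and 2^(n+1) in the accepting configuration. *)

Section Runs.
Variables (Sigma Q G : finType) (A : pda Sigma Q G).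

Lemma run_cat p s w1 q t w2 r u :
  run A p s w1 q t -> run A q t w2 r u -> run A p s (w1 ++ w2) r u.
Proof.
elim=> [//|p0 s0 a o p' s' w0 q0 t0 Ht Ho _ IH] Hr.
by rewrite -catA; apply: run_step Ht Ho _; apply: IH.
Qed.

Lemma run_eps p o p' s s' w q t :
  pda_trans A (p, None, o, p') -> apply_op o s = Some s' ->
  run A p' s' w q t -> run A p s w q t.
Proof. exact: (@run_step _ _ _ A p s None). Qed.

Lemma run_read p x p' s w q t :
  pda_trans A (p, Some x, Nop G, p') ->
  run A p' s w q t -> run A p s (x :: w) q t.
Proof. by move=> Ht; apply: (run_step Ht). Qed.

Lemma run_invariant (P : Q -> seq G -> Prop) p s w q t :
  (forall p a o q s s', pda_trans A (p, a, o, q) -> apply_op o s = Some s' ->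
     P p s -> P q s') ->
  run A p s w q t -> P p s -> P q t.
Proof.
move=> HP; elim=> [//|p0 s0 a o p' s' w0 q0 t0 Ht Ho _ IH] H0.
exact/IH/(HP _ _ _ _ _ _ Ht Ho).
Qed.

Lemma run_potential (f : Q -> seq G -> nat) p s w q t :
  (forall p a o q s s', pda_trans A (p, a, o, q) -> apply_op o s = Some s' ->
     f q s' = f p s + size (label_word a)) ->
  run A p s w q t -> f q t = f p s + size w.
Proof.
move=> Hf; elim=> [p0 s0|p0 s0 a o p' s' w0 q0 t0 Ht Ho _ IH]; first by rewrite addn0.
by rewrite IH (Hf _ _ _ _ _ _ Ht Ho) size_cat addnA.
Qed.

End Runs.

Section BinaryCounter.
Variables (Sigma : finType) (n : nat).

Definition state := ('I_n.+1 * 'I_3)%type.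

Definition level (q : state) : nat := q.1.
Definition phase (q : state) : nat := q.2.

Definition state_at (k ph : nat) : state := (inord k, inord ph).

Lemma level_state_at k ph : k <= n -> level (state_at k ph) = k.
Proof. exact: inordK. Qed.

Lemma phase_state_at k ph : ph < 3 -> phase (state_at k ph) = ph.
Proof. exact: inordK. Qed.

Inductive counter_trans : state -> option Sigma -> stack_op bool -> state -> Prop :=
  | trans_read p q x : level p = 0 -> level q = 0 -> phase q = (phase p).+1 ->
      counter_trans p (Some x) (Nop bool) q
  | trans_call p q (b : bool) : level p = (level q).+1 -> phase p = b ->
      phase q = 0 -> counter_trans p None (Push b) q
  | trans_return p q (b : bool) : level q = (level p).+1 -> phase p = 2 ->
      phase q = b.+1 -> counter_trans p None (Pop b) q.

Definition counter_pda : pda Sigma state bool :=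
  Pda (state_at n 0) (pred1 (state_at n 2))
      (fun x => counter_trans x.1.1.1 x.1.1.2 x.1.2 x.2).

Lemma card_state : #|{: state}| = 3 * n + 3.
Proof. by rewrite card_prod !card_ord mulnC mulnSr. Qed.

Lemma counter_trans_height p a o q s s' :
  counter_trans p a o q -> apply_op o s = Some s' ->
  size s + level p = n -> size s' + level q = n.
Proof.
case=> {p a o q} [p q x Hp Hq _ [<-]|p q b Hl _ _ [<-]|p q b Hl _ _].
- by rewrite Hp Hq.
- by rewrite Hl /= addSnnS.
- by case: s => [|c s] //=; case: eqP => // _ [<-]; rewrite Hl addnS.
Qed.

Lemma counter_run_height p s w q t :
  run counter_pda p s w q t -> size s + level p = n -> size t + level q = n.
Proof.
apply: (run_invariant (P := fun q s => size s + level q = n)).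
exact: counter_trans_height.
Qed.

Fixpoint stack_value (e : nat) (s : seq bool) : nat :=
  if s is b :: s' then b * 2 ^ e + stack_value e.+1 s' else 0.

Definition progress (q : state) (s : seq bool) : nat :=
  phase q * 2 ^ level q + stack_value (level q).+1 s.

Lemma counter_trans_progress p a o q s s' :
  counter_trans p a o q -> apply_op o s = Some s' ->
  progress q s' = progress p s + size (label_word a).
Proof.
rewrite /progress.
case=> {p a o q} [p q x Hp Hq Hph [<-]|p q b Hl Hp Hq [<-]|p q b Hl Hp Hq].
- by rewrite Hp Hq Hph /=; lia.
- by rewrite Hl Hp Hq /=; lia.
- case: s => [|c s] //=; case: eqP => // -> [<-].
  by rewrite Hl Hp Hq !expnS; lia.
Qed.

Lemma counter_run_progress p s w q t :
  run counter_pda p s w q t -> progress q t = progress p s + size w.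
Proof. exact/run_potential/counter_trans_progress. Qed.

Lemma counter_read ph x : ph < 2 ->
  pda_trans counter_pda (state_at 0 ph, Some x, Nop bool, state_at 0 ph.+1).
Proof.
move=> Hph; apply: trans_read; rewrite ?level_state_at // !phase_state_at //.
exact: ltnW.
Qed.

Lemma counter_call k (b : bool) : k < n ->
  pda_trans counter_pda (state_at k.+1 b, None, Push b, state_at k 0).
Proof.
move=> Hk; apply: trans_call; rewrite ?level_state_at ?phase_state_at //.
  exact: ltnW.
by case: b.
Qed.

Lemma counter_return k (b : bool) : k < n ->
  pda_trans counter_pda (state_at k 2, None, Pop b, state_at k.+1 b.+1).
Proof.
move=> Hk; apply: trans_return; rewrite ?level_state_at ?phase_state_at //.
- exact: ltnW.
- by case: b.
Qed.

Lemma counter_run_block k w s : k <= n -> size w = 2 ^ k.+1 ->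
  run counter_pda (state_at k 0) s w (state_at k 2) s.
Proof.
elim: k w s => [|k IH] w s Hk Hw.
  case: w Hw => [|x [|y []]] // _.
  exact: run_read (counter_read x _) (run_read (counter_read y _) (run_nil _ _ _)).
have Hw2 : size w = 2 ^ k.+1 + 2 ^ k.+1 by rewrite Hw expnS mul2n -addnn.
have halves : size (take (2 ^ k.+1) w) = 2 ^ k.+1 /\
              size (drop (2 ^ k.+1) w) = 2 ^ k.+1.
  by rewrite size_drop size_takel Hw2 ?leq_addr ?addnK.
have Hk' : k <= n := ltnW Hk.
rewrite -(cat_take_drop (2 ^ k.+1) w) -[drop _ _]cats0.
apply: run_eps (counter_call false Hk) _ _; first by [].
apply: run_cat; first exact: IH Hk' halves.1.
apply: run_eps (counter_return false Hk) _ _; first by [].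
apply: run_eps (counter_call true Hk) _ _; first by [].
apply: run_cat; first exact: IH Hk' halves.2.
exact: run_eps (counter_return true Hk) _ (run_nil _ _ _).
Qed.

Lemma counter_stack_bounded : stack_bounded counter_pda n.
Proof.
move=> w q t /counter_run_height.
by rewrite level_state_at // => /(_ erefl) <-; rewrite leq_addr.
Qed.

Lemma counter_accepts w : accepts counter_pda w <-> size w = 2 ^ n.+1.
Proof.
split=> [[q [/eqP -> /counter_run_progress]] | Hw].
  rewrite /progress !level_state_at ?phase_state_at //= expnS.
  by rewrite mul0n !addn0 add0n => <-.
by exists (state_at n 2); split; [exact: eqxx | exact: counter_run_block].
Qed.

End BinaryCounter.

Theorem claim4p6 (Gamma2 : finType) (n : nat) :
  exists (Q G : finType) (A : pda Gamma2 Q G),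
    #|Q| = 3 * n + 3 /\ #|G| = 2 /\ stack_bounded A n /\
    (forall w : seq Gamma2, accepts A w <-> size w = 2 ^ n.+1).
Proof.
exists (state n), bool, (counter_pda Gamma2 n).
split; first exact: card_state.
split; first by rewrite card_bool.
split; first exact: counter_stack_bounded.
exact: counter_accepts.
Qed.
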